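(* Let $G$ be a group with generating set $S$ not containing the identity. Then every color-preserving automorphism of the Cayley color digraph of $G$ with respect to $S$ is an isometry of $G$ with respect to the cardinal metric $d_C$.
   Context: The cardinal norm is $\|x\| = \min\{|A| : A\subseteq S,\ x\in\langle A\rangle\}$, where $\langle A\rangle$ is the subgroup generated by $A$, and $d_C(g,h)=\|g^{-1}h\|$. The Cayley color digraph has vertex set $G$ and, for each $x\in G$ and $c\in S$, an arc $(x,xc)$ of color $c$. A color-preserving automorphism is a digraph automorphism $\alpha$ (bijection of $G$ with $(x,y)$ an arc iff $(\alpha(x),\alpha(y))$ is an arc) such that $(x,y)$ has color $c$ iff $(\alpha(x),\alpha(y))$ has color $c$. *)

From Stdlib Require Import List ClassicalEpsilon.
Import ListNotations.
Set Implicit Arguments.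

Section Group.
Variables (T : Type) (mul : T -> T -> T) (inv : T -> T) (e : T).

Definition is_group : Prop :=
  (forall x y z, mul x (mul y z) = mul (mul x y) z) /\
  (forall x, mul e x = x) /\
  (forall x, mul (inv x) x = e).

Inductive in_gen (A : T -> Prop) : T -> Prop :=
  | gen_one : in_gen A e
  | gen_base : forall a, A a -> in_gen A a
  | gen_mul : forall x y, in_gen A x -> in_gen A y -> in_gen A (mul x y)
  | gen_inv : forall x, in_gen A x -> in_gen A (inv x).

Definition generates (S : T -> Prop) : Prop := forall x, in_gen S x.

(* A finite subset A of S, represented by a duplicate-free list
   (so |A| = length A), with x in <A>. *)
Definition witnesses (S : T -> Prop) (x : T) (A : list T) : Prop :=
  NoDup A /\ (forall a, In a A -> S a) /\ in_gen (fun a => In a A) x.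

Definition is_card_norm (S : T -> Prop) (x : T) (n : nat) : Prop :=
  (exists A, witnesses S x A /\ length A = n) /\
  (forall A, witnesses S x A -> n <= length A).

Definition card_norm (S : T -> Prop) (x : T) : nat :=
  epsilon (inhabits 0) (is_card_norm S x).

Definition dC (S : T -> Prop) (g h : T) : nat := card_norm S (mul (inv g) h).

Definition colored_arc (S : T -> Prop) (x y c : T) : Prop := S c /\ y = mul x c.
Definition cayley_arc (S : T -> Prop) (x y : T) : Prop :=
  exists c, colored_arc S x y c.

Definition color_preserving_aut (S : T -> Prop) (alpha : T -> T) : Prop :=
  (exists beta : T -> T,
     (forall x, beta (alpha x) = x) /\ (forall y, alpha (beta y) = y)) /\
  (forall x y, cayley_arc S x y <-> cayley_arc S (alpha x) (alpha y)) /\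
  (forall x y c, colored_arc S x y c <-> colored_arc S (alpha x) (alpha y) c).

Definition isometry (S : T -> Prop) (alpha : T -> T) : Prop :=
  forall g h, dC S (alpha g) (alpha h) = dC S g h.
End Group.

(* Preserving colours means alpha (x c) = alpha x * c for every generator c.
   The elements g with alpha (x g) = alpha x * g for all x form a subgroup,
   which therefore is all of G.  Hence alpha g^-1 * alpha h = g^-1 h, and
   d_C(g, h) depends only on g^-1 h. *)
From Stdlib Require Import List ClassicalEpsilon.
Set Implicit Arguments.

Section RightEquivariance.
Variables (T : Type) (mul : T -> T -> T) (inv : T -> T) (e : T).
Hypothesis HG : is_group mul inv e.

Let mulA : forall x y z, mul x (mul y z) = mul (mul x y) z.
Proof. apply HG. Qed.

Let mul1g : forall x, mul e x = x.
Proof. apply HG. Qed.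

Let mulVg : forall x, mul (inv x) x = e.
Proof. apply HG. Qed.

(* An idempotent of a group is the identity. *)
Lemma mulgV (x : T) : mul x (inv x) = e.
Proof.
  set (y := mul x (inv x)).
  assert (y_idem : mul y y = y).
  { unfold y. rewrite <- mulA, (mulA (inv x) x), mulVg, mul1g. reflexivity. }
  rewrite <- (mul1g y), <- (mulVg y) at 1.
  rewrite <- mulA, y_idem. apply mulVg.
Qed.

Lemma mulg1 (x : T) : mul x e = x.
Proof. rewrite <- (mulVg x), mulA, mulgV. apply mul1g. Qed.

Definition commutes_right (alpha : T -> T) (g : T) : Prop :=
  forall x, alpha (mul x g) = mul (alpha x) g.

Lemma commutes_right1 (alpha : T -> T) : commutes_right alpha e.
Proof. intro x. rewrite !mulg1. reflexivity. Qed.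

Lemma commutes_rightM (alpha : T -> T) (g h : T) :
  commutes_right alpha g -> commutes_right alpha h ->
  commutes_right alpha (mul g h).
Proof. intros Hg Hh x. rewrite mulA, Hh, Hg, mulA. reflexivity. Qed.

Lemma commutes_rightV (alpha : T -> T) (g : T) :
  commutes_right alpha g -> commutes_right alpha (inv g).
Proof.
  intros Hg x.
  assert (Hx : alpha x = mul (alpha (mul x (inv g))) g).
  { rewrite <- Hg, <- mulA, mulVg, mulg1. reflexivity. }
  rewrite Hx, <- mulA, mulgV, mulg1. reflexivity.
Qed.

Lemma commutes_right_in_gen (alpha : T -> T) (A : T -> Prop) (g : T) :
  (forall a, A a -> commutes_right alpha a) ->
  in_gen mul inv e A g -> commutes_right alpha g.
Proof.
  intros HA Hg. induction Hg.
  - apply commutes_right1.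
  - auto.
  - apply commutes_rightM; assumption.
  - apply commutes_rightV; assumption.
Qed.

Lemma commutes_right_quotient (alpha : T -> T) (g h : T) :
  commutes_right alpha (mul (inv g) h) ->
  mul (inv (alpha g)) (alpha h) = mul (inv g) h.
Proof.
  intro Hgh.
  assert (Hh : h = mul g (mul (inv g) h)) by (rewrite mulA, mulgV, mul1g; reflexivity).
  rewrite Hh at 1. rewrite Hgh, mulA, mulVg, mul1g. reflexivity.
Qed.

Lemma commutes_right_isometry (S : T -> Prop) (alpha : T -> T) :
  (forall g, commutes_right alpha g) -> isometry mul inv e S alpha.
Proof.
  intros Halpha g h. unfold dC.
  rewrite commutes_right_quotient by apply Halpha. reflexivity.
Qed.

End RightEquivariance.

Lemma color_preserving_commutes_right (T : Type) (mul : T -> T -> T)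
  (S : T -> Prop) (alpha : T -> T) (c : T) :
  color_preserving_aut mul S alpha -> S c -> commutes_right mul alpha c.
Proof.
  intros [_ [_ Hcol]] Sc x.
  assert (Harc : colored_arc mul S x (mul x c) c) by (split; auto).
  apply Hcol in Harc. destruct Harc as [_ Hxc]. exact Hxc.
Qed.

Theorem mainTheorem10 (T : Type) (mul : T -> T -> T) (inv : T -> T) (e : T)
  (HG : is_group mul inv e) (S : T -> Prop)
  (HS : generates mul inv e S) (He : ~ S e) (alpha : T -> T) :
  color_preserving_aut mul S alpha -> isometry mul inv e S alpha.
Proof.
  intro Halpha.
  apply (commutes_right_isometry HG). intro g.
  apply (commutes_right_in_gen HG (A := S)); [| apply HS].
  intros c Sc. exact (color_preserving_commutes_right c Halpha Sc).
Qed.
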